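(* Let $\sigma=(\sigma_j)_{j=1}^\infty$ be a strictly decreasing sequence of real numbers with $\sigma_j\to0$, and let $\mathcal{K}(\sigma)=\{\sigma_je_j\}_{j=1}^\infty\cup\{0\}\subset c_0$. Let $n\ge1$ and $\gamma>0$. If $\sigma_1\le\gamma/2$ and there is $N\in\mathbb{N}\cup\{\infty\}$ such that $\sum_{j=1}^N\sigma_j^n\le(\gamma/2)^n$, then $d_n^\gamma(\mathcal{K}(\sigma))_{c_0}\le\sigma_N$, where $\sigma_\infty:=0$.
   Context: $c_0$ denotes the Banach space of real sequences converging to $0$ with the norm $\|x\|=\sup_j|x_j|$, and $(e_j)$ is its standard unit vector basis. For $k\ge1$ and a norm $\|\cdot\|_{Y_k}$ on $\mathbb{R}^k$ let $B_{Y_k}=\{y\in\mathbb{R}^k:\|y\|_{Y_k}\le1\}$. For $\mathcal{K}\subset c_0$ and $\gamma\ge0$, $d^\gamma(\mathcal{K},Y_k)_{c_0}=\inf_{\Phi}\sup_{f\in\mathcal{K}}\inf_{y\in B_{Y_k}}\|f-\Phi(y)\|$, the infimum over all maps $\Phi:B_{Y_k}\to c_0$ with $\|\Phi(y)-\Phi(y')\|\le\gamma\|y-y'\|_{Y_k}$ for all $y,y'\in B_{Y_k}$, and the Lipschitz width is $d_n^\gamma(\mathcal{K})_{c_0}=\inf_{1\le k\le n}\inf_{\|\cdot\|_{Y_k}}d^\gamma(\mathcal{K},Y_k)_{c_0}$, the inner infimum over all norms on $\mathbb{R}^k$. *)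

From HB Require Import structures.
From mathcomp Require Import all_boot all_order all_algebra.
From mathcomp Require Import all_classical all_reals all_analysis.
Set Implicit Arguments. Unset Strict Implicit. Unset Printing Implicit Defensive.
Import Order.TTheory GRing.Theory Num.Theory.
Import numFieldNormedType.Exports.
Local Open Scope classical_set_scope.
Local Open Scope ring_scope.

Section Defs.
Variable R : realType.

Definition in_c0 (x : nat -> R) : Prop := x @ \oo --> (0 : R).

Definition supnorm (x : nat -> R) : \bar R :=
  ereal_sup (range (fun j => (`|x j|)%:E)).

Definition seqsub (x y : nat -> R) : nat -> R := fun i => x i - y i.

Definition unitvec (j : nat) : nat -> R := fun i => (i == j)%:R.

Definition is_norm (k : nat) (N : 'rV[R]_k -> R) : Prop :=
  [/\ forall y, 0 <= N y,
      forall y, N y = 0 -> y = 0,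
      forall (a : R) y, N (a *: y) = `|a| * N y
    & forall y y', N (y + y') <= N y + N y'].

Definition unit_ball (k : nat) (N : 'rV[R]_k -> R) : set 'rV[R]_k :=
  [set y | N y <= 1].

(* gamma-Lipschitz maps B_{Y_k} -> c_0 (values outside the ball are irrelevant) *)
Definition lip_map (gamma : R) (k : nat) (N : 'rV[R]_k -> R)
    (Phi : 'rV[R]_k -> (nat -> R)) : Prop :=
  (forall y, unit_ball N y -> in_c0 (Phi y)) /\
  (forall y y', unit_ball N y -> unit_ball N y' ->
     (supnorm (seqsub (Phi y) (Phi y')) <= (gamma * N (y - y'))%:E)%E).

Definition dgamma (K : set (nat -> R)) (gamma : R) (k : nat)
    (N : 'rV[R]_k -> R) : \bar R :=
  ereal_inf [set e | exists Phi, lip_map gamma N Phi /\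
    e = ereal_sup [set d | exists2 f, K f &
          d = ereal_inf [set supnorm (seqsub f (Phi y)) | y in unit_ball N]]].

Definition lip_width (n : nat) (gamma : R) (K : set (nat -> R)) : \bar R :=
  ereal_inf [set e | exists (k : nat) (N : 'rV[R]_k -> R),
     [/\ (1 <= k)%N, (k <= n)%N, is_norm N & e = dgamma K gamma N]].

(* K(sigma) = {sigma_j e_j : j >= 1} u {0}  (sequence sigma indexed from 1) *)
Definition Ksigma (sigma : nat -> R) : set (nat -> R) :=
  [set f | (exists2 j, (1 <= j)%N & f = (fun i => sigma j * unitvec j i))
           \/ f = (fun _ => 0)].

End Defs.

From HB Require Import structures.
From mathcomp Require Import all_boot all_order all_algebra.
From mathcomp Require Import all_classical all_reals all_analysis.
From mathcomp Require Import zify ring lra.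
Set Implicit Arguments. Unset Strict Implicit. Unset Printing Implicit Defensive.
Import Order.TTheory GRing.Theory Num.Theory.
Import numFieldNormedType.Exports.

(** Choose y_1, ..., y_m in the unit ball of l_oo^n with |y_i - y_j| > sigma_i / gamma
    for i < j.  Such a packing exists because sum_i (2 sigma_i / gamma)^n <= 1: on the grid
    of mesh 1/M in [-1, 1]^n, the grid ball of radius floor (M sigma_i / gamma) has at most
    (4 M sigma_i / gamma)^n points, fewer than the (2M + 1)^n grid points altogether, so the
    y_i can be picked greedily.  Then Phi(x)_i = max (0, sigma_i - gamma |x - y_i|) (i <= m)
    is a gamma-Lipschitz map into c_0 with Phi(y_j) = sigma_j e_j, and every element of
    K(sigma) is within sigma_m of some sigma_j e_j with j <= m.  For N = oo let m -> oo. *)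

Lemma card_bigcup_le (T : finType) m (A : nat -> {set T}) :
  #|\bigcup_(i < m) A i| <= \sum_(i < m) #|A i|.
Proof.
apply: (big_ind2 (fun (S : {set T}) k => #|S| <= k)) => // [|S1 k1 S2 k2 h1 h2].
  by rewrite cards0.
exact: leq_trans (leq_card_setU _ _) (leq_add h1 h2).
Qed.

Lemma greedy_avoiding_seq (T : finType) (B : nat -> T -> {set T}) (b : nat -> nat) m :
  (forall i x, #|B i x| <= b i) -> \sum_(i < m) b i < #|T| ->
  exists y : nat -> T, forall i j, i < j < m -> y j \notin B i (y i).
Proof.
move=> cardB; elim: m => [|m IH] hsum.
  by case/card_gt0P: (leq_ltn_trans (leq0n _) hsum) => x _; exists (fun=> x); lia.
rewrite big_ord_recr /= in hsum.
have [y hy] := IH (leq_ltn_trans (leq_addr _ _) hsum).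
set U := \bigcup_(i < m) B i (y i).
have [x] : exists x, x \in ~: U.
  apply/card_gt0P; rewrite cardsCs finset.setCK subn_gt0.
  apply: leq_ltn_trans _ (leq_ltn_trans (leq_addr _ _) hsum).
  apply: leq_trans (card_bigcup_le m (fun i => B i (y i))) _.
  exact: leq_sum.
rewrite inE => xU.
exists (fun k => if k == m then x else y k) => i j /andP[ij jm] /=.
rewrite (_ : (i == m) = false); last by lia.
have [_|jm'] := eqVneq j m; last by apply: hy; lia.
apply: contra xU => xB; apply/bigcupP; exists (Ordinal (leq_trans ij jm)) => //.
Qed.

Local Notation grid n K := {ffun 'I_n -> 'I_K}.

Definition grid_ball n K (h : grid n K) (c : nat) : {set grid n K} :=
  [set g : grid n K | [forall k, (g k <= h k + c) && (h k <= g k + c)]].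

Lemma card_grid_ball n K (h : grid n K) c : #|grid_ball h c| <= (2 * c).+1 ^ n.
Proof.
pose offset (g : grid n K) : {ffun 'I_n -> 'I_(2 * c).+1} :=
  [ffun k => inord (g k + c - h k)].
rewrite -(@card_in_imset _ _ offset).
  by apply: leq_trans (max_card _) _; rewrite card_ffun !card_ord.
move=> g g' /[!inE] /forallP hg /forallP hg' /ffunP eq_off.
apply/ffunP => k; apply: val_inj.
move: (eq_off k) (hg k) (hg' k); rewrite !ffunE => /(congr1 val) /= + /andP[? ?] /andP[? ?].
by rewrite !inordK; lia.
Qed.

Local Open Scope ring_scope.

Lemma ler_mx_norm_entry (R : realDomainType) m n (A : 'M[R]_(m, n)) i j :
  `|A i j| <= `|A|.
Proof.
rewrite [leRHS]/Num.Def.normr /= mx_normrE.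
by apply/bigmax_geP; right; exists (i, j).
Qed.

Lemma mx_norm_le (R : realDomainType) m n (A : 'M[R]_(m, n)) (x : R) :
  0 <= x -> (forall i j, `|A i j| <= x) -> `|A| <= x.
Proof.
move=> x_ge0 hA; rewrite [leLHS]/Num.Def.normr /= mx_normrE.
by apply/bigmax_leP; split => // -[i j].
Qed.

Section GridEmbedding.
Variables (R : realType) (n M : nat).
Hypothesis M_gt0 : (0 < M)%N.

Definition grid_point (g : grid n (2 * M).+1) : 'rV[R]_n :=
  \row_k ((g k)%:R / M%:R - 1).

Lemma grid_point_norm_le1 g : `|grid_point g| <= 1.
Proof.
apply: mx_norm_le => // i k; rewrite mxE ler_norml.
have : (g k <= 2 * M)%N by rewrite -ltnS.
rewrite -(ler_nat R) natrM => gk_le.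
have : 0 <= (g k)%:R / M%:R :> R by rewrite divr_ge0.
have : (g k)%:R / M%:R <= 2 :> R by rewrite ler_pdivrMr ?ltr0n.
lra.
Qed.

Lemma grid_point_dist g h c :
  g \notin grid_ball h c -> c.+1%:R / M%:R <= `|grid_point g - grid_point h|.
Proof.
rewrite inE negb_forall => /existsP[k]; rewrite negb_and -!ltnNge => hk.
apply: le_trans (ler_mx_norm_entry _ ord0 k).
rewrite !mxE (_ : _ - _ = ((g k)%:R - (h k)%:R) / M%:R); last by ring.
rewrite normrM [`|_^-1|]gtr0_norm ?invr_gt0 ?ltr0n // ler_pM2r ?invr_gt0 ?ltr0n //.
wlog hk_lt : g h hk / (h k + c < g k)%N.
  move=> sym; case/orP: (hk) => hk'; [|rewrite distrC];
    by apply: sym; rewrite ?hk' ?orbT.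
rewrite -natrB ?ger0_norm ?ler0n ?ler_nat ?ltn_subRL //.
exact: ltnW (leq_ltn_trans (leq_addr _ _) hk_lt).
Qed.

End GridEmbedding.

Lemma exists_nat_scale (R : archiRealFieldType) m (t : nat -> R) :
  (forall i, (i < m)%N -> 0 < t i) ->
  exists2 M : nat, (0 < M)%N & forall i, (i < m)%N -> 1 < t i * M%:R.
Proof.
move=> t_gt0; set S := \sum_(i < m) (t i)^-1.
have S_ge0 : 0 <= S by apply: sumr_ge0 => i _; rewrite invr_ge0 ltW ?t_gt0.
exists (Num.truncn S).+1 => // i im.
have tiV_le : (t i)^-1 <= S.
  rewrite /S (bigD1 (Ordinal im)) //= lerDl.
  by apply: sumr_ge0 => j _; rewrite invr_ge0 ltW ?t_gt0.
rewrite -ltr_pdivrMl ?t_gt0 // mulr1.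
exact: le_lt_trans tiV_le (truncnS_gt _).
Qed.

Lemma grid_balls_count_lt (R : realType) n m M (t : nat -> R) :
  (1 <= n)%N -> (forall i, (i < m)%N -> 1 < t i * M%:R) ->
  \sum_(i < m) (2 * t i) ^+ n <= 1 ->
  (\sum_(i < m) (2 * Num.truncn (t i * M%:R)).+1 ^ n < (2 * M).+1 ^ n)%N.
Proof.
move=> n1 tM hsum; rewrite -(ltr_nat R) natr_sum !natrX.
have M_ge0 : (0 : R) <= 2 * M%:R by rewrite mulr_ge0.
apply: (@le_lt_trans _ _ ((2 * M%:R) ^+ n)).
  apply: (@le_trans _ _ (\sum_(i < m) (2 * M%:R * (2 * t i)) ^+ n)).
    apply: ler_sum => i _.
    have tMi := tM i (ltn_ord i).
    have /truncn_itv/andP[c_le _] : 0 <= t i * M%:R by apply/ltW/(lt_trans ltr01).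
    have c_ge1 : (1 <= Num.truncn (t i * M%:R))%N by rewrite truncn_gt0 ltW.
    have : 1 <= (Num.truncn (t i * M%:R))%:R :> R by rewrite ler1n.
    move: (Num.truncn _) c_le => c c_le c1.
    (* 2 c + 1 <= 4 c <= 4 t_i M *)
    rewrite natrX (_ : (2 * c).+1%:R = 2 * c%:R + 1); last by rewrite -natr1 natrM.
    by rewrite lerXn2r ?nnegrE; lra.
  under eq_bigr do rewrite exprMn.
  by rewrite -mulr_sumr ler_piMr ?exprn_ge0.
rewrite (_ : (2 * M).+1%:R = 2 * M%:R + 1); last by rewrite -natr1 natrM.
by rewrite ltrXn2r ?nnegrE -?lt0n //; lra.
Qed.

Lemma rV_ball_packing (R : realType) (n m : nat) (t : nat -> R) :
  (1 <= n)%N -> (forall i, (i < m)%N -> 0 < t i) ->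
  \sum_(i < m) (2 * t i) ^+ n <= 1 ->
  exists y : nat -> 'rV[R]_n, (forall i, `|y i| <= 1) /\
    forall i j, (i < j < m)%N -> t i < `|y j - y i|.
Proof.
move=> n1 t_gt0 hsum; have [M M_gt0 tM] := exists_nat_scale t_gt0.
pose c i := Num.truncn (t i * M%:R).
have [g g_sep] : exists g : nat -> grid n (2 * M).+1,
    forall i j, (i < j < m)%N -> g j \notin grid_ball (g i) (c i).
  apply: (@greedy_avoiding_seq _ (fun i h => grid_ball h (c i)) (fun i => (2 * c i).+1 ^ n)%N).
    by move=> i h; exact: card_grid_ball.
  by rewrite card_ffun !card_ord; exact: grid_balls_count_lt.
exists (fun i => grid_point R (g i)); split => [i|i j ijm].
  exact: grid_point_norm_le1.
apply: lt_le_trans (grid_point_dist R M_gt0 (g_sep i j ijm)).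
have /truncn_itv/andP[_ ltc] : 0 <= t i * M%:R.
  by apply/ltW/(lt_trans ltr01)/tM; lia.
by rewrite ltr_pdivlMr ?ltr0n.
Qed.

Local Open Scope classical_set_scope.

Section DecreasingFromOne.
Variables (R : realType) (sigma : nat -> R).
Hypothesis sigma_decr : forall j, (1 <= j)%N -> sigma j.+1 < sigma j.

Lemma decr_seq_le i j : (1 <= i <= j)%N -> sigma j <= sigma i.
Proof.
case/andP=> i1; elim: j => [|j IH] ij; first lia.
have [->//|ij'] := eqVneq i j.+1.
apply: le_trans (IH _); [apply/ltW/sigma_decr|]; lia.
Qed.

Hypothesis sigma_cvg0 : sigma @ \oo --> 0.

Lemma decr_cvg0_gt0 j : (1 <= j)%N -> 0 < sigma j.
Proof.
move=> j1; apply: le_lt_trans _ (sigma_decr j1).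
have <- : lim (sigma @ \oo) = 0 by exact: cvg_lim.
apply: limr_le; first by apply/cvg_ex; exists 0.
by exists j.+1 => // k /= jk; apply: decr_seq_le; lia.
Qed.

End DecreasingFromOne.

Lemma ler_max0_dist (R : realDomainType) (a b : R) :
  `|Num.max 0 a - Num.max 0 b| <= `|a - b|.
Proof.
have [a0|a0] := leP 0 a; have [b0|b0] := leP 0 b; rewrite ?subrr ?normr0 //.
- by rewrite subr0 ger0_norm //; apply: le_trans (ler_norm _); lra.
- by rewrite sub0r normrN ger0_norm // distrC; apply: le_trans (ler_norm _); lra.
Qed.

Lemma supnorm_le (R : realType) (x : nat -> R) (c : R) :
  (forall i, `|x i| <= c) -> (supnorm x <= c%:E)%E.
Proof. by move=> xc; apply: ge_ereal_sup => _ [i _ <-]; rewrite lee_fin. Qed.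

Lemma is_norm_normr (R : realType) k : is_norm (Num.norm : 'rV[R]_k -> R).
Proof. by split; [exact: normr_ge0 | exact: normr0_eq0 | exact: normrZ | exact: ler_normD]. Qed.

Lemma lip_width_le (R : realType) n gamma (K : set (nat -> R))
    (Phi : 'rV[R]_n -> nat -> R) (e : R) :
  (1 <= n)%N -> lip_map gamma Num.norm Phi ->
  (forall f, K f -> exists2 x, `|x| <= 1 & forall i, `|f i - Phi x i| <= e) ->
  (lip_width n gamma K <= e%:E)%E.
Proof.
move=> n1 Phi_lip K_near.
apply: le_trans (ereal_inf_lbound _) _.
  by exists n, Num.norm; split => //; exact: is_norm_normr.
apply: le_trans (ereal_inf_lbound _) _; first by exists Phi; split.
apply: ge_ereal_sup => _ [f Kf ->]; have [x x1 fx] := K_near f Kf.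
by apply: le_trans (ereal_inf_lbound _) (supnorm_le fx); exists x.
Qed.

Section TentMap.
Variables (R : realType) (n m : nat) (gamma : R) (sigma : nat -> R).
Variable y : nat -> 'rV[R]_n.

Definition tent_map (x : 'rV[R]_n) : nat -> R := fun i =>
  if (1 <= i <= m)%N then Num.max 0 (sigma i - gamma * `|x - y i|) else 0.

Lemma tent_map_lip : 0 <= gamma -> lip_map gamma Num.norm tent_map.
Proof.
move=> gamma_ge0; split=> [x _|x x' _ _].
  apply: cvg_near_cst; exists m.+1 => // i /= mi.
  by rewrite /tent_map; case: ifP => //; lia.
apply: supnorm_le => i; rewrite /seqsub /tent_map.
case: ifP => _; last by rewrite subrr normr0 mulr_ge0.
apply: le_trans (ler_max0_dist _ _) _.
rewrite (_ : _ - _ = gamma * (`|x' - y i| - `|x - y i|)); last by ring.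
rewrite normrM ger0_norm // ler_wpM2l // distrC.
by apply: le_trans (ler_dist_dist _ _) _; rewrite opprB addrA subrK.
Qed.

Hypothesis y_sep : forall i j, (1 <= i <= m)%N -> (1 <= j <= m)%N -> i != j ->
  sigma i <= gamma * `|y i - y j|.

Lemma tent_map_node j : (1 <= j <= m)%N -> 0 <= sigma j ->
  tent_map (y j) =1 (fun i => sigma j * unitvec R j i).
Proof.
move=> jm sigma_j_ge0 i; rewrite /tent_map /unitvec.
have [->|ij] := eqVneq i j.
  by rewrite jm subrr normr0 mulr0 subr0 mulr1 max_r.
rewrite mulr0; case: ifP => // im.
by apply: max_l; rewrite subr_le0 distrC; apply: y_sep.
Qed.

End TentMap.

Lemma Ksigma_near_nodes (R : realType) (sigma : nat -> R) m :
  (forall i j, (1 <= i <= j)%N -> sigma j <= sigma i) ->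
  (forall j, (1 <= j)%N -> 0 <= sigma j) -> (1 <= m)%N ->
  forall f, Ksigma sigma f ->
  exists2 j, (1 <= j <= m)%N & forall i, `|f i - sigma j * unitvec R j i| <= sigma m.
Proof.
move=> sigma_le sigma_ge0 m1 f [[j j1 ->]|->]; last first.
  exists m => [|i]; first by rewrite m1 leqnn.
  rewrite sub0r normrN normrM ger0_norm ?sigma_ge0 // /unitvec.
  by case: eqP; rewrite ?normr1 ?normr0 ?mulr1 ?mulr0 ?sigma_ge0.
have [jm|mj] := leqP j m.
  by exists j => [|i]; rewrite ?j1 // subrr normr0 sigma_ge0.
exists m => [|i]; first by rewrite m1 leqnn.
rewrite /unitvec; have [->|ij] := eqVneq i j.
  rewrite gtn_eqF // mulr1 mulr0 subr0 ger0_norm ?sigma_ge0 //.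
  by apply: sigma_le; rewrite m1 ltnW.
rewrite mulr0 sub0r normrN; case: eqP => _; rewrite ?mulr1 ?mulr0 ?normr0.
  by rewrite ger0_norm ?sigma_ge0.
exact: sigma_ge0.
Qed.

Lemma lip_width_Ksigma_le (R : realType) (sigma : nat -> R) n gamma m :
  (forall j, (1 <= j)%N -> sigma j.+1 < sigma j) -> sigma @ \oo --> 0 ->
  (1 <= n)%N -> 0 < gamma -> (1 <= m)%N ->
  \sum_(1 <= j < m.+1) sigma j ^+ n <= (gamma / 2) ^+ n ->
  (lip_width n gamma (Ksigma sigma) <= (sigma m)%:E)%E.
Proof.
move=> sigma_decr sigma_cvg0 n1 gamma_gt0 m1 hsum.
have sigma_gt0 := decr_cvg0_gt0 sigma_decr sigma_cvg0.
have sigma_le := decr_seq_le sigma_decr.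
pose t i := sigma i.+1 / gamma.
have t_gt0 i : (i < m)%N -> 0 < t i by move=> _; rewrite divr_gt0 ?sigma_gt0.
have t_sum : \sum_(i < m) (2 * t i) ^+ n <= 1.
  have gamma2_gt0 : 0 < gamma / 2 by rewrite divr_gt0.
  rewrite -(ler_pM2r (exprn_gt0 n gamma2_gt0)) mul1r mulr_suml.
  apply: le_trans hsum; rewrite big_add1 big_mkord le_eqVlt; apply/orP; left.
  apply/eqP/eq_bigr => i _; rewrite -exprMn /t; congr (_ ^+ _).
  by field; rewrite gt_eqF.
have [y [y_le1 y_sep]] := rV_ball_packing n1 t_gt0 t_sum.
pose Y j := y j.-1.
have t_pred k : (1 <= k)%N -> t k.-1 = sigma k / gamma.
  by move=> k1; rewrite /t prednK.
have Y_sep i j : (1 <= i <= m)%N -> (1 <= j <= m)%N -> i != j ->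
    sigma i <= gamma * `|Y i - Y j|.
  move=> im jm ij; rewrite -ler_pdivrMl // mulrC -t_pred; last by lia.
  have [lt_ij|lt_ji|eq_ij] := ltngtP i j; last by rewrite eq_ij eqxx in ij.
    by rewrite distrC; apply/ltW/y_sep; lia.
  apply: le_trans (ltW (y_sep j.-1 i.-1 _)); last by lia.
  by rewrite !t_pred ?ler_pM2r ?invr_gt0 ?sigma_le //; lia.
apply: (lip_width_le n1 (tent_map_lip m sigma Y (ltW gamma_gt0))).
move=> f /(Ksigma_near_nodes sigma_le (fun j j1 => ltW (sigma_gt0 j j1)) m1)[j jm fj].
exists (Y j) => [|i]; first exact: y_le1.
by rewrite tent_map_node //; apply/ltW/sigma_gt0; case/andP: jm.
Qed.

Lemma ereal_le0_cvg0 (R : realType) (x : \bar R) (u : nat -> R) :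
  u @ \oo --> 0 -> (\forall m \near \oo, x <= (u m)%:E)%E -> (x <= 0)%E.
Proof.
move=> u0 x_le_u; apply/lee_addgt0Pr => e e_gt0; rewrite add0e.
near \oo => m; apply: le_trans (_ : x <= (u m)%:E)%E _; first exact: (near x_le_u m).
rewrite lee_fin.
apply/ltW/(le_lt_trans (ler_norm _)); near: m; exact: cvgr0_norm_lt.
Unshelve. all: by end_near.
Qed.

Theorem lemma4p9 (R : realType) (sigma : nat -> R) (n : nat) (gamma : R)
    (N : option nat) :
  (forall j, (1 <= j)%N -> sigma j.+1 < sigma j) ->
  (fun j => sigma j) @ \oo --> (0 : R) ->
  (1 <= n)%N -> 0 < gamma ->
  sigma 1%N <= gamma / 2 ->
  match N with
  | Some m => (1 <= m)%N /\ \sum_(1 <= j < m.+1) sigma j ^+ n <= (gamma / 2) ^+ n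
  | None => (\sum_(1 <= j <oo) ((sigma j ^+ n)%:E) <= ((gamma / 2) ^+ n)%:E)%E
  end ->
  (lip_width n gamma (Ksigma sigma) <=
     (match N with Some m => sigma m | None => 0 end)%:E)%E.
Proof.
(* [sigma 1 <= gamma / 2] is implied by the sum condition. *)
move=> sigma_decr sigma_cvg0 n1 gamma_gt0 _.
have width_le m := @lip_width_Ksigma_le R sigma n gamma m sigma_decr sigma_cvg0 n1 gamma_gt0.
case: N => [m [m1 hsum]|hseries]; first exact: width_le.
apply: (ereal_le0_cvg0 sigma_cvg0); near=> m; apply: width_le; first by near: m; exists 1%N.
rewrite -lee_fin -sumEFin; apply: le_trans hseries.
apply: nneseries_lim_ge => k k1 _; rewrite lee_fin exprn_ge0 // ltW //.
exact: decr_cvg0_gt0 sigma_decr sigma_cvg0 _ k1.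
Unshelve. all: by end_near.
Qed.
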